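(* Let $G$ be a strongly regular graph with parameters $(n,d,1,\mu)$ (i.e. with $\lambda=1$). Let $m$ be the number of edges of $G$, let $\theta_1\ge\theta_2\ge\cdots\ge\theta_n$ be the eigenvalues of its adjacency matrix, let $n^+$ be the number of positive eigenvalues, let $\omega=\omega(G)$ be the clique number, and let $\ell=\min(n^+,\omega)$. Then \[ \theta_1^2+\theta_2^2+\cdots+\theta_\ell^2\le \frac{2m(\omega-1)}{\omega}. \]
   Context: A strongly regular graph with parameters $(n,d,\lambda,\mu)$ is a $d$-regular graph on $n$ vertices in which every pair of adjacent vertices has exactly $\lambda$ common neighbours and every pair of distinct non-adjacent vertices has exactly $\mu$ common neighbours. Here $\mu$ denotes the SRG parameter, not an eigenvalue. *)

From HB Require Import structures.
From mathcomp Require Import all_boot all_order all_algebra.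
From mathcomp Require Import reals.
Set Implicit Arguments. Unset Strict Implicit. Unset Printing Implicit Defensive.
Import Order.TTheory GRing.Theory Num.Theory.
Local Open Scope ring_scope.

Definition simple_graph (n : nat) (e : rel 'I_n) : Prop :=
  (forall x, ~~ e x x) /\ (forall x y, e x y = e y x).

Definition srg (n d lam mu : nat) (e : rel 'I_n) : Prop :=
  [/\ simple_graph e,
      (forall x, #|[set y | e x y]| = d),
      (forall x y, e x y -> #|[set z | e x z && e y z]| = lam) &
      (forall x y, x != y -> ~~ e x y -> #|[set z | e x z && e y z]| = mu)].

Definition num_edges (n : nat) (e : rel 'I_n) : nat :=
  #|[set E : {set 'I_n} | [exists x, exists y, e x y && (E == [set x; y])]]|.

Definition is_clique (n : nat) (e : rel 'I_n) (A : {set 'I_n}) : bool :=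
  [forall x in A, forall y in A, (x != y) ==> e x y].

Definition clique_number (n : nat) (e : rel 'I_n) : nat :=
  \max_(A : {set 'I_n} | is_clique e A) #|A|.

Definition adj_matrix (R : nzRingType) (n : nat) (e : rel 'I_n) : 'M[R]_n :=
  \matrix_(i, j) (e i j)%:R%R.

From HB Require Import structures.
From mathcomp Require Import all_boot all_order all_algebra.
From mathcomp Require Import reals.
From mathcomp Require Import ring lra zify.
Set Implicit Arguments. Unset Strict Implicit. Unset Printing Implicit Defensive.
Import Order.TTheory GRing.Theory Num.Theory.
Local Open Scope ring_scope.

(* With lambda = 1 every edge lies in exactly one triangle, so omega = 3 once d > 0,
   and the right-hand side is at least 2nd/3 because 2m = nd.  The adjacency matrix
   satisfies A^2 = (d - mu) I + (1 - mu) A + mu J, so every eigenvalue other than d is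
   a root of x^2 + (mu - 1) x - (d - mu), and a positive such root r has r^2 <= d - mu.
   When mu > 0, comparing traces shows that d is a simple eigenvalue, so the l <= 3
   largest eigenvalues contribute at most d^2 + 2 (d - mu), which is at most 2nd/3 by
   the feasibility condition d (d - 2) = (n - d - 1) mu.  When mu = 0 the graph is a
   disjoint union of triangles, with spectrum {2, -1} and n = 3 n^+. *)

Lemma prodrN_seq (I : Type) (R : comPzRingType) (s : seq I) (F : I -> R) :
  \prod_(x <- s) - F x = (-1) ^+ size s * \prod_(x <- s) F x.
Proof.
elim: s => [|x s IH]; first by rewrite !big_nil mul1r.
by rewrite !big_cons IH exprS mulN1r !mulNr mulrCA.
Qed.

Lemma char_poly_comp (R : fieldType) n (B : 'M[R]_n) (q : {poly R}) :
  char_poly B \Po q = \det (q%:M - map_mx polyC B).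
Proof.
rewrite /char_poly -det_map_mx; congr (\det _); apply/matrixP => i j.
by rewrite !mxE rmorphB rmorphMn /= comp_polyX comp_polyC.
Qed.

Section CharPolyRoots.
Variables (R : fieldType) (n : nat) (A : 'M[R]_n) (s : seq R).
Hypothesis charA : char_poly A = \prod_(x <- s) ('X - x%:P).

Lemma size_char_poly_roots : size s = n.
Proof. by have := size_char_poly A; rewrite charA size_prod_XsubC => -[]. Qed.

Lemma sum_char_poly_roots : \sum_(x <- s) x = \tr A.
Proof.
case: n A charA size_char_poly_roots => [|n'] B charB sizes.
  by case: s sizes => // _; rewrite big_nil /mxtrace big_ord0.
apply: oppr_inj; rewrite -char_poly_trace // charB -coefPn_prod_XsubC ?sizes //.
Qed.

Lemma char_poly_sqrmx : char_poly (A *m A) = \prod_(x <- s) ('X - (x ^+ 2)%:P).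
Proof.
pose Ap := map_mx polyC A.
have factor : ('X%:M - Ap) *m ((- 'X)%:M - Ap) = - ('X^2%:M - map_mx polyC (A *m A)).
  rewrite map_mxM mulmxBl !mulmxBr !mul_mx_scalar mul_scalar_mx.
  apply/matrixP => i j; rewrite !mxE.
  by case: (i == j); rewrite ?mulr1n ?mulr0n; ring.
have det_factor : char_poly A * (char_poly A \Po - 'X) =
                  (-1) ^+ n * (char_poly (A *m A) \Po 'X^2).
  by rewrite !char_poly_comp -det_mulmx factor -scaleN1r detZ.
have prod_factor : char_poly A * (char_poly A \Po - 'X) =
    (-1) ^+ n * ((\prod_(x <- s) ('X - (x ^+ 2)%:P)) \Po 'X^2).
  rewrite charA !rmorph_prod -big_split -size_char_poly_roots -prodrN_seq /=.
  apply: eq_bigr => x _; rewrite !comp_polyB !comp_polyX !comp_polyC rmorphXn.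
  ring.
have /lreg_sign/eqP : (-1) ^+ n * (char_poly (A *m A) \Po 'X^2) =
    (-1) ^+ n * ((\prod_(x <- s) ('X - (x ^+ 2)%:P)) \Po 'X^2).
  by rewrite -det_factor prod_factor.
by rewrite -subr_eq0 -comp_polyB comp_poly_eq0 ?size_polyXn // subr_eq0 => /eqP.
Qed.
End CharPolyRoots.

Lemma sum_sqr_char_poly_roots (R : fieldType) n (A : 'M[R]_n) (s : seq R) :
  char_poly A = \prod_(x <- s) ('X - x%:P) -> \sum_(x <- s) x ^+ 2 = \tr (A *m A).
Proof.
move=> charA; rewrite -(big_map (fun x => x ^+ 2) predT id).
by apply: sum_char_poly_roots; rewrite big_map (char_poly_sqrmx charA).
Qed.

Lemma eq_set2 (T : finType) (a b x y : T) :
  [set a; b] = [set x; y] -> (a, b) = (x, y) \/ (a, b) = (y, x).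
Proof.
move=> E; have xab : x \in [set a; b] by rewrite E set21.
have yab : y \in [set a; b] by rewrite E set22.
have : a \in [set x; y] by rewrite -E set21.
have : b \in [set x; y] by rewrite -E set22.
by move: xab yab; rewrite !inE => /pred2P[]? /pred2P[]? /pred2P[]? /pred2P[]?; subst; auto.
Qed.

Lemma is_cliqueP n (e : rel 'I_n) (A : {set 'I_n}) :
  reflect {in A &, forall x y, x != y -> e x y} (is_clique e A).
Proof.
apply: (iffP forall_inP) => [cl x y xA yA xy | cl x xA].
  by have /forall_inP/(_ y yA)/implyP := cl x xA; apply.
by apply/forall_inP => y yA; apply/implyP; apply: cl.
Qed.

Lemma sumr_pred_card (R : pzSemiRingType) (T : finType) (P : pred T) :
  \sum_x ((P x)%:R : R) = #|[set x | P x]|%:R.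
Proof.
by rewrite -sum1_card natr_sum [RHS]big_mkcond; apply: eq_bigr => x _; rewrite inE; case: (P x).
Qed.

Lemma mulmx_const1 (R : pzRingType) n :
  (const_mx 1 : 'M[R]_n) *m (const_mx 1 : 'M[R]_n) = n%:R *: const_mx 1.
Proof.
apply/matrixP => i j; rewrite !mxE mulr1.
under eq_bigr do rewrite !mxE mulr1.
by rewrite sumr_const card_ord.
Qed.

Lemma sum_nth_take (T : Type) (x0 : T) (V : nmodType) (F : T -> V) (s : seq T) l :
  (l <= size s)%N -> \sum_(i < l) F (nth x0 s i) = \sum_(x <- take l s) F x.
Proof.
move=> l_le; rewrite (big_nth x0) size_takel // big_mkord.
by apply: eq_bigr => i _; rewrite nth_take.
Qed.

Lemma sumr_const_seq (T : Type) (V : nmodType) (c : V) (s : seq T) :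
  \sum_(x <- s) c = c *+ size s.
Proof. by rewrite big_const_seq count_predT iter_addr_0. Qed.

Lemma sum_count_mem (T : eqType) (V : nmodType) (f : T -> V) (a : T) (s : seq T) :
  {in s, forall x, x != a -> f x = 0} -> \sum_(x <- s) f x = f a *+ count_mem a s.
Proof.
elim: s => [|x s IH] f0; first by rewrite big_nil.
rewrite big_cons IH => [|y ys]; last by apply: f0; rewrite inE ys orbT.
have [->|xa] := eqVneq x a; first by rewrite /= eqxx add1n mulrS.
by rewrite /= (negbTE xa) f0 ?mem_head // add0r.
Qed.

Lemma all_gt0_take_sorted (R : realDomainType) (s : seq R) (l : nat) :
  sorted (fun x y => y <= x) s -> (l <= count (fun x => (0 < x)%R) s)%N ->
  all (fun x => 0 < x) (take l s).
Proof.
elim: s l => [|x s IH] [|l] //= sorted_xs.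
have [_|x_le0] := ltrP 0 x; first by rewrite add1n ltnS; apply: IH (path_sorted sorted_xs).
have le_x : all (fun y => y <= x) s.
  by apply: order_path_min sorted_xs => a b c ab bc; apply: le_trans bc ab.
rewrite (eq_in_count (a2 := pred0)) ?count_pred0 // => y /(allP le_x) y_le_x.
by apply/negbTE; rewrite -leNgt (le_trans y_le_x x_le0).
Qed.

Lemma feasible_param_ineq (n d mu : nat) : (0 < mu <= d)%N -> (d + 2 <= n)%N ->
  (n * mu + 2 * d = d * d + mu * d + mu)%N -> (3 * (d * d + 2 * (d - mu)) <= 2 * n * d)%N.
Proof.
move=> /andP[mu_gt0 mu_le_d] d2_le_n paramE.
have d_ge3 : (3 <= d)%N.
  have : ((d + 2) * mu <= n * mu)%N by rewrite leq_mul2r d2_le_n orbT.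
  nia.
(* what remains after multiplying by [mu], eliminating [n * mu] and setting [t = d - mu] *)
have cubic t : (8 * t * d + 2 * d * d <= d * d * d + t * d * d + 6 * t * t)%N.
  have [d_ge8|d_lt8] := leqP 8 d; first nia.
  have [t_le1|t_ge2] := leqP t 1; first nia.
  have : (d = 3 \/ d = 4 \/ d = 5 \/ d = 6 \/ d = 7)%N by lia.
  by case=> [->|[->|[->|[->|->]]]]; nia.
rewrite -(leq_pmul2l mu_gt0) -(leq_add2r (4 * d * d)%N).
have -> : (mu * (2 * n * d) + 4 * d * d = 2 * d * (d * d + mu * d + mu))%N.
  by rewrite -paramE; ring.
move: (d - mu)%N (subnK mu_le_d) (cubic (d - mu)%N) => t <- {paramE d_ge3 d2_le_n cubic}.
lia.
Qed.

Section StronglyRegularLambda1.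
Variables (n d mu : nat) (e : rel 'I_n).
Hypothesis srg_e : srg d 1 mu e.

Lemma srg_irr x : e x x = false.
Proof. by case: srg_e => -[/(_ x)/negbTE]. Qed.

Lemma srg_sym x y : e x y = e y x.
Proof. by case: srg_e => -[_ ->]. Qed.

Lemma srg_deg x : #|[set y | e x y]| = d.
Proof. by case: srg_e. Qed.

Lemma srg_lambda x y : e x y -> #|[set z | e x z && e y z]| = 1%N.
Proof. by case: srg_e => _ _ lam _; apply: lam. Qed.

Lemma srg_mu x y : x != y -> ~~ e x y -> #|[set z | e x z && e y z]| = mu.
Proof. by case: srg_e => _ _ _; apply. Qed.

Lemma clique_card_le3 (A : {set 'I_n}) : is_clique e A -> (#|A| <= 3)%N.
Proof.
move=> /is_cliqueP cl; have [/card_gt1P[x [y [xA yA xy]]]|] := ltnP 1 #|A|; last first.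
  by move/leq_trans; apply.
have sub : A \subset [set x; y] :|: [set z | e x z && e y z].
  apply/subsetP => z zA; rewrite !inE.
  have [//|/eqP zx] := z =P x; have [//|/eqP zy] := z =P y.
  by rewrite !cl // eq_sym.
apply: leq_trans (subset_leq_card sub) _; apply: leq_trans (leq_card_setU _ _) _.
by rewrite cards2 srg_lambda ?cl // xy.
Qed.

Lemma clique_number_le3 : (clique_number e <= 3)%N.
Proof. by apply/bigmax_leqP => A; apply: clique_card_le3. Qed.

Lemma clique_number_eq3 : (0 < d)%N -> (0 < n)%N -> clique_number e = 3%N.
Proof.
move=> d_gt0 n_gt0; apply/eqP; rewrite eqn_leq clique_number_le3 /=.
pose x := Ordinal n_gt0.
have /set0Pn[y] : [set y | e x y] != set0 by rewrite -card_gt0 srg_deg.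
rewrite inE => exy.
have /set0Pn[z] : [set z | e x z && e y z] != set0 by rewrite -card_gt0 srg_lambda.
rewrite inE => /andP[exz eyz].
have neq u v : e u v -> u != v by apply: contraTneq => ->; rewrite srg_irr.
have triangle : is_clique e [set x; y; z].
  apply/is_cliqueP => u v; rewrite !inE.
  by move=> /orP[/orP[]|]/eqP-> /orP[/orP[]|]/eqP->; rewrite ?eqxx // => _;
     rewrite // srg_sym.
have card3 : #|[set x; y; z]| = 3%N.
  by rewrite -setUA cardsU1 cards2 !inE negb_or !neq.
by rewrite -card3; apply: (@leq_bigmax_cond _ (is_clique e) (fun A => #|A|)).
Qed.

Lemma handshake : (n * d <= 2 * num_edges e)%N.
Proof.
pose arcs := [set p : 'I_n * 'I_n | e p.1 p.2].
pose edges := [set E : {set 'I_n} | [exists x, exists y, e x y && (E == [set x; y])]].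
have arcsE : #|arcs| = (n * d)%N.
  rewrite -sum1_card (eq_bigl (fun p => xpredT p.1 && e p.1 p.2)) => [|p]; last by rewrite inE.
  rewrite -(pair_big_dep xpredT e (fun _ _ => 1%N)) /=.
  under eq_bigr => x _ do rewrite sum_nat_cond_const srg_deg muln1.
  by rewrite sum_nat_const card_ord.
rewrite -arcsE -sum1_card mulnC.
rewrite (partition_big (fun p => [set p.1; p.2]) (mem edges)) => [|p]; last first.
  by rewrite !inE => exy; apply/existsP; exists p.1; apply/existsP; exists p.2; rewrite exy /=.
rewrite /num_edges -/edges -sum_nat_const; apply: leq_sum => E.
move=> /[!inE] /existsP[x /existsP[y /andP[_ /eqP->]]].
rewrite sum_nat_cond_const muln1.
have sub : [set p | (p \in arcs) && ([set p.1; p.2] == [set x; y])] \subset [set (x, y); (y, x)].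
  by apply/subsetP => -[a b]; rewrite !inE => /andP[_ /eqP/eq_set2[]->]; rewrite eqxx ?orbT.
by apply: leq_trans (subset_leq_card sub) _; rewrite cards2 ltnS leq_b1.
Qed.

Definition has_nonedge := [exists x, exists y, (x != y) && ~~ e x y].

(* When [e] is complete the parameter [mu] is unconstrained; [eff_mu] is the
   value it actually takes in the identity for the square of the adjacency matrix. *)
Definition eff_mu : nat := if has_nonedge then mu else 0.

Lemma eff_mu_gt0_bounds : (0 < eff_mu)%N -> (eff_mu <= d)%N /\ (d + 2 <= n)%N.
Proof.
rewrite /eff_mu; case: ifP => // /existsP[x /existsP[y /andP[xy nexy]]] _; split.
  rewrite -(srg_mu xy nexy) -(srg_deg x); apply: subset_leq_card.
  by apply/subsetP => z; rewrite !inE => /andP[].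
have <- : #|x |: (y |: [set z | e x z])| = (d + 2)%N.
  by rewrite !cardsU1 srg_deg !inE negb_or xy srg_irr (negbTE nexy) addn2.
by rewrite -[leqRHS]card_ord max_card.
Qed.

Lemma card_common_nbrs x y :
  #|[set z | e x z && e y z]| = if x == y then d else if e x y then 1%N else eff_mu.
Proof.
have [<-|xy] := eqVneq.
  by rewrite -(srg_deg x); apply: eq_card => z; rewrite !inE andbb.
have [exy|nexy] := ifPn; first exact: srg_lambda.
have nonedge : has_nonedge by apply/existsP; exists x; apply/existsP; exists y; rewrite xy.
by rewrite /eff_mu nonedge srg_mu.
Qed.

Section AdjacencyMatrix.
Variable R : numFieldType.
Local Notation A := (adj_matrix R e).
Local Notation J := (const_mx 1 : 'M[R]_n).

Lemma adj_mx_sqr :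
  A *m A = (d%:R - eff_mu%:R)%:M + (1 - eff_mu%:R) *: A + eff_mu%:R *: J.
Proof.
apply/matrixP => x y; rewrite !mxE.
under eq_bigr => z _ do rewrite !mxE (srg_sym z y) -natrM mulnb.
rewrite sumr_pred_card card_common_nbrs.
have [<-|_] := eqVneq x y; first by rewrite srg_irr mulr1n mulr0 addr0 mulr1 subrK.
by case: (e x y); rewrite mulr0n add0r ?mulr1 ?mulr0 ?add0r // subrK.
Qed.

Lemma adj_mx_const1 : A *m J = d%:R *: J.
Proof.
apply/matrixP => x y; rewrite !mxE mulr1.
under eq_bigr => z _ do rewrite !mxE mulr1.
by rewrite sumr_pred_card srg_deg.
Qed.

Lemma trace_adj_mx : \tr A = 0.
Proof. by rewrite /mxtrace big1 // => x _; rewrite mxE srg_irr. Qed.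

Lemma trace_adj_mx_sqr : \tr (A *m A) = (n * d)%:R.
Proof.
rewrite /mxtrace (eq_bigr (fun _ => d%:R)) => [|x _]; last first.
  by rewrite adj_mx_sqr !mxE eqxx srg_irr mulr0 addr0 mulr1 subrK.
by rewrite sumr_const card_ord natrM mulr_natl.
Qed.

Lemma eigenvalue_adj_mx x : eigenvalue A x ->
  x = d%:R \/ x ^+ 2 + (eff_mu%:R - 1) * x - (d%:R - eff_mu%:R) = 0.
Proof.
move=> /eigenvalueP[v vA v_neq0].
have [vJ0|vJ_neq0] := eqVneq (v *m J) 0; [right|left].
  have : v *m (A *m A) = x ^+ 2 *: v by rewrite mulmxA vA -scalemxAl vA scalerA.
  rewrite adj_mx_sqr !mulmxDr -!scalemxAr vJ0 scaler0 addr0 mul_mx_scalar vA scalerA => E.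
  suff : (x ^+ 2 + (eff_mu%:R - 1) * x - (d%:R - eff_mu%:R)) *: v =
         x ^+ 2 *: v - ((d%:R - eff_mu%:R) *: v + ((1 - eff_mu%:R) * x) *: v).
    by rewrite E subrr => /eqP; rewrite scaler_eq0 (negbTE v_neq0) orbF => /eqP.
  by rewrite -scalerDl -scalerBl; congr (_ *: v); ring.
have : x *: (v *m J) = d%:R *: (v *m J).
  by rewrite scalemxAl -vA -mulmxA adj_mx_const1 scalemxAr.
move/eqP; rewrite -subr_eq0 -scalerBl scaler_eq0 (negbTE vJ_neq0) orbF subr_eq0.
by move/eqP.
Qed.

Lemma srg_param_eqr : (0 < n)%N ->
  d%:R ^+ 2 = d%:R - eff_mu%:R + (1 - eff_mu%:R) * d%:R + eff_mu%:R * n%:R :> R.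
Proof.
move=> n_gt0; pose x := Ordinal n_gt0.
have : (A *m A) *m J = A *m (A *m J) by rewrite mulmxA.
rewrite [in RHS]adj_mx_const1 -scalemxAr adj_mx_const1 scalerA adj_mx_sqr.
rewrite !mulmxDl mul_scalar_mx -!scalemxAl adj_mx_const1 mulmx_const1 !scalerA.
by move/matrixP/(_ x x); rewrite !mxE !mulr1 expr2 => ->.
Qed.

End AdjacencyMatrix.

(* [d (d - lambda - 1) = (n - d - 1) mu] for [lambda = 1], without subtraction *)
Lemma srg_param_eq : (0 < n)%N -> (n * eff_mu + 2 * d = d * d + eff_mu * d + eff_mu)%N.
Proof.
move=> /(srg_param_eqr rat) paramE; apply/eqP; rewrite -(eqr_nat rat) !natrD !natrM.
by apply/eqP; move: paramE; rewrite expr2 => ->; ring.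
Qed.

Section Spectrum.
Variables (R : realFieldType) (s : seq R).
Hypothesis charA : char_poly (adj_matrix R e) = \prod_(x <- s) ('X - x%:P).

Lemma sum_spectrum : \sum_(x <- s) x = 0.
Proof. by rewrite (sum_char_poly_roots charA) trace_adj_mx. Qed.

Lemma sum_sqr_spectrum : \sum_(x <- s) x ^+ 2 = (n * d)%:R.
Proof. by rewrite (sum_sqr_char_poly_roots charA) trace_adj_mx_sqr. Qed.

Lemma spectrum_cases x : x \in s ->
  x = d%:R \/ x ^+ 2 + (eff_mu%:R - 1) * x - (d%:R - eff_mu%:R) = 0.
Proof.
by move=> xs; apply: eigenvalue_adj_mx; rewrite eigenvalue_root_char charA root_prod_XsubC.
Qed.

(* The quadratic of [spectrum_cases] vanishes on the spectrum except at [d], where it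
   takes the value [n * mu]; its trace at [A] is also [n * mu]. *)
Lemma count_spectrum_deg : (0 < eff_mu)%N -> count_mem d%:R s = 1%N.
Proof.
move=> mu_gt0; have [_ d2_le_n] := eff_mu_gt0_bounds mu_gt0.
have n_gt0 : (0 < n)%N by apply: leq_trans d2_le_n; rewrite addn2.
have paramE := srg_param_eqr R n_gt0.
set D : R := d%:R in paramE *; set U : R := eff_mu%:R in paramE *.
set N : R := n%:R in paramE *.
have : \sum_(x <- s) (x ^+ 2 + (U - 1) * x - (D - U)) = (U * N) *+ count_mem D s.
  rewrite (sum_count_mem _ (a := D)) => [|x /spectrum_cases[->|//]]; last by rewrite eqxx.
  by rewrite paramE; congr (_ *+ _); ring.
rewrite sumrB big_split /= -mulr_sumr sum_sqr_spectrum sum_spectrum sumr_const_seq.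
rewrite (size_char_poly_roots charA) natrM mulr0 addr0 -/N -/D.
rewrite -[_ *+ n]mulr_natr -[_ *+ count_mem _ _]mulr_natr => countE.
have UN_neq0 : U * N != 0 by rewrite mulf_neq0 // gt_eqF // ltr0n.
apply/eqP; rewrite -(eqr_nat R); apply/eqP/(mulfI UN_neq0).
by rewrite -countE mulr1; ring.
Qed.

Lemma sqr_pos_spectrum_le x : (0 < eff_mu)%N -> x \in s -> 0 < x -> x != d%:R ->
  x ^+ 2 <= d%:R - eff_mu%:R.
Proof.
move=> mu_gt0 xs x_gt0 x_neq_d.
have [x_eq_d|qx] := spectrum_cases xs; first by rewrite x_eq_d eqxx in x_neq_d.
have : 0 <= (eff_mu%:R - 1) * x by rewrite mulr_ge0 ?subr_ge0 ?ler1n ?ltW.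
lra.
Qed.

Variable t : seq R.
Hypotheses (t_sub : subseq t s) (t_pos : all (fun x => 0 < x) t).

Lemma sum_sqr_pos_le_mu0 : eff_mu = 0%N -> (0 < n)%N -> (0 < d)%N ->
  3 * \sum_(x <- t) x ^+ 2 <= (2 * n * d)%:R.
Proof.
move=> mu0 n_gt0 d_gt0.
have d2 : d = 2%N by have := srg_param_eq n_gt0; rewrite mu0; nia.
have eig x : x \in s -> x = 2 \/ x = -1.
  move=> /spectrum_cases; rewrite mu0 d2 => -[->|]; first by left.
  have -> : x ^+ 2 + (0%:R - 1) * x - (2%:R - 0%:R) = (x - 2) * (x + 1) by ring.
  by move/eqP; rewrite mulf_eq0 subr_eq0 addr_eq0 => /orP[]/eqP->; [left|right].
have count2 : (3 * count_mem 2%R s = n)%N.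
  have : \sum_(x <- s) (x + 1) = 3 *+ count_mem 2%R s.
    rewrite (sum_count_mem _ (a := 2)) => [|x /eig[->|->]]; rewrite ?eqxx ?addNr //.
    by congr (_ *+ _); lra.
  rewrite big_split /= sum_spectrum add0r sumr_const_seq (size_char_poly_roots charA).
  by rewrite -mulr_natr -natrM => /eqP; rewrite eqr_nat eq_sym => /eqP.
have -> : \sum_(x <- t) x ^+ 2 = 4 *+ count_mem 2%R t.
  rewrite (sum_count_mem _ (a := 2)) => [|x xt]; first by congr (_ *+ _); lra.
  have /allP/(_ x xt) := t_pos.
  by have /eig[->|->] := mem_subseq t_sub xt; rewrite ?eqxx // ltr0N1.
have : (count_mem 2%R t <= count_mem 2%R s)%N by apply: leq_count_subseq.
rewrite -count2 d2 -(ler_nat R) -mulr_natr !natrM; lra.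
Qed.

Lemma sum_sqr_pos_le_mu_gt0 : (0 < eff_mu)%N -> (size t <= 3)%N ->
  3 * \sum_(x <- t) x ^+ 2 <= (2 * n * d)%:R.
Proof.
move=> mu_gt0 size_t; have [mu_le_d d2_le_n] := eff_mu_gt0_bounds mu_gt0.
have n_gt0 : (0 < n)%N by apply: leq_trans d2_le_n; rewrite addn2.
have mu_range : (0 < eff_mu <= d)%N by rewrite mu_gt0.
have := feasible_param_ineq mu_range d2_le_n (srg_param_eq n_gt0).
rewrite -(ler_nat R) !(natrM, natrD) natrB // => bound.
set D : R := d%:R in bound *; set U : R := eff_mu%:R in bound *.
set K := D ^+ 2 - (D - U).
have termwise x : x \in t -> x ^+ 2 <= (x == D)%:R * K + (D - U).
  move=> xt; have [->|x_neq_d] := eqVneq x D; first by rewrite mul1r subrK.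
  by rewrite mul0r add0r sqr_pos_spectrum_le ?(mem_subseq t_sub) ?(allP t_pos).
have sumK : \sum_(x <- t) (x == D)%:R * K = K *+ count_mem D t.
  by rewrite (sum_count_mem _ (a := D)) ?eqxx ?mul1r // => x _ /negbTE->; rewrite mul0r.
have sum_le : \sum_(x <- t) x ^+ 2 <= K *+ count_mem D t + (D - U) *+ size t.
  rewrite -sumK -sumr_const_seq -big_split big_seq [X in _ <= X]big_seq.
  by apply: ler_sum => x; apply: termwise.
have U_le_D : U <= D by rewrite ler_nat.
have D_ge1 : 1 <= D by rewrite ler1n (leq_trans mu_gt0).
have K_ge0 : 0 <= K by have U_ge0 : 0 <= U := ler0n _ _; rewrite /K expr2; nra.
have count_t : (count_mem D t)%:R <= 1 :> R.
  by rewrite lern1 -(count_spectrum_deg mu_gt0) leq_count_subseq.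
have K_count : K *+ count_mem D t <= K by rewrite -mulr_natr ler_piMr.
have DU_size : (D - U) *+ size t <= 3 * (D - U).
  rewrite -[_ *+ size t]mulr_natl; apply: ler_wpM2r; first by rewrite subr_ge0.
  by rewrite ler_nat.
have KE : K = D * D - (D - U) by rewrite /K expr2.
lra.
Qed.

Lemma sum_sqr_pos_le : (size t <= 3)%N -> 3 * \sum_(x <- t) x ^+ 2 <= (2 * n * d)%:R.
Proof.
move=> size_t; have [nd0|] := posnP (n * d).
  suff -> : t = [::] by rewrite big_nil mulr0.
  have : \sum_(x <- s) x ^+ 2 == 0 by rewrite sum_sqr_spectrum nd0.
  rewrite psumr_eq0 => [/allP s0|x _]; last exact: sqr_ge0.
  case: t t_sub t_pos {size_t} => // x t' /mem_subseq/(_ x (mem_head _ _))/s0.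
  by rewrite sqrf_eq0 => /eqP-> /andP[]; rewrite ltxx.
rewrite muln_gt0 => /andP[n_gt0 d_gt0].
have [mu0|mu_gt0] := posnP eff_mu; first exact: sum_sqr_pos_le_mu0.
exact: sum_sqr_pos_le_mu_gt0.
Qed.

End Spectrum.

End StronglyRegularLambda1.

Theorem mainTheorem5 (R : realType) (n d mu : nat) (e : rel 'I_n) (s : seq R) :
  @srg n d 1 mu e ->
  char_poly (adj_matrix R e) = \prod_(x <- s) ('X - x%:P) ->
  sorted (fun x y => y <= x) s ->
  let m := num_edges e in
  let omega := clique_number e in
  let npos := count (fun x => 0 < x) s in
  let l := minn npos omega in
  \sum_(i < l) s`_i ^+ 2 <= 2 * m%:R * (omega%:R - 1) / omega%:R.
Proof.
move=> srg_e charA sorted_s /=.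
set m := num_edges e; set omega := clique_number e.
set npos := count _ s; set l := minn npos omega.
have l_le_npos : (l <= npos)%N := geq_minl _ _.
have l_le3 : (l <= 3)%N := leq_trans (geq_minr _ _) (clique_number_le3 srg_e).
have l_le_size : (l <= size s)%N := leq_trans l_le_npos (count_size _ _).
have size_take_s : (size (take l s) <= 3)%N by rewrite size_takel.
have := sum_sqr_pos_le srg_e charA (take_subseq s l)
  (all_gt0_take_sorted sorted_s l_le_npos) size_take_s.
rewrite -(sum_nth_take 0 (fun x => x ^+ 2) l_le_size) => bound.
have := handshake srg_e; rewrite -(ler_nat R) !natrM => edges.
have [nd0|] := posnP (n * d).
  have rhs_ge0 (w : nat) : 0 <= 2 * m%:R * (w%:R - 1) / w%:R :> R.
    case: w => [|w]; first by rewrite invr0 mulr0.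
    by rewrite divr_ge0 ?mulr_ge0 ?subr_ge0 ?ler1n.
  move: bound; rewrite -mulnA nd0 muln0 => bound.
  by apply: le_trans (rhs_ge0 omega); lra.
rewrite muln_gt0 => /andP[n_gt0 d_gt0].
rewrite /omega (clique_number_eq3 srg_e d_gt0 n_gt0) natrM in bound *.
lra.
Qed.
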